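(* Let $q$ be a prime power, $m\ge1$, $j\ge1$, let $G\in GF(q^m)[x]$ be a separable polynomial of degree $\tau$ with factorization $G(x)=\prod_{i=1}^{\tau}(x-\beta_i)$, the $\beta_i$ lying in some finite extension field of $GF(q^m)$, and let $L=\{\alpha_1,\dots,\alpha_n\}\subseteq GF(q^m)$ with $G(\alpha_k)\ne 0$ for all $k$. Then the cumulative-separable code $\Gamma(L,G^j)$ equals the intersection (common subcode) of the cumulative codes $\Gamma(L,(x-\beta_i)^j)$, $i=1,\dots,\tau$.
   Context: For a set $L=\{\alpha_1,\dots,\alpha_n\}$ of distinct elements of a finite field $F\supseteq GF(q)$ and a polynomial $P\in F[x]$ with $P(\alpha_k)\neq0$ for all $k$, the $q$-ary Goppa code is $\Gamma(L,P)=\{c\in GF(q)^n:\ \sum_k \frac{c_k}{x-\alpha_k}\equiv 0 \pmod{P(x)}\}$. A Goppa code $\Gamma(L,G^j)$ with $G$ separable is called cumulative-separable; a Goppa code with Goppa polynomial $(x-\beta)^j$ is called cumulative. *)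

From HB Require Import structures.
From mathcomp Require Import all_boot all_order all_algebra all_field.
Set Implicit Arguments. Unset Strict Implicit. Unset Printing Implicit Defensive.
Import GRing.Theory.
Local Open Scope ring_scope.

(* Inverse of (x - a) modulo P, for P.[a] != 0:
   (x - a) * inv_mod_lin P a = 1 - P * (-P.[a]^-1)  (i.e. == 1 mod P). *)
Definition inv_mod_lin (F : fieldType) (P : {poly F}) (a : F) : {poly F} :=
  - (P.[a])^-1 *: ((P - (P.[a])%:P) %/ ('X - a%:P)).

(* The q-ary Goppa code Gamma(L, P): the subfield GF(q) is given by the
   field Fq together with its embedding f into the field F containing
   L = {alpha_0, ..., alpha_{n-1}} and the coefficients of P.
   c is in the code iff  sum_k c_k / (x - alpha_k) == 0  (mod P). *)
Definition goppa_code (Fq : finFieldType) (F : fieldType) (f : Fq -> F)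
    (n : nat) (alpha : 'I_n -> F) (P : {poly F}) : {set 'rV[Fq]_n} :=
  [set c : 'rV[Fq]_n |
     P %| \sum_(k < n) (f (c 0 k)) *: inv_mod_lin P (alpha k)].

From HB Require Import structures.
From mathcomp Require Import all_boot all_order all_algebra all_field.
Set Implicit Arguments. Unset Strict Implicit. Unset Printing Implicit Defensive.
Import GRing.Theory.
Local Open Scope ring_scope.

(* Extend scalars to a field E over which G splits.  The inverse of
   [x - alpha] modulo [G^j] maps to an inverse of [x - alpha] modulo every
   factor [(x - beta_i)^j], so the syndrome of [c] modulo [G^j] is congruent
   to its syndrome modulo each factor.  Separability makes the factors
   pairwise coprime, and a polynomial is divisible by a product of pairwise
   coprime polynomials iff it is divisible by each of them. *)

Definition goppa_syndrome (Fq : finFieldType) (F : fieldType) (f : Fq -> F)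
    (n : nat) (alpha : 'I_n -> F) (P : {poly F}) (c : 'rV[Fq]_n) : {poly F} :=
  \sum_(k < n) f (c 0 k) *: inv_mod_lin P (alpha k).

Lemma in_goppa_code (Fq : finFieldType) (F : fieldType) (f : Fq -> F)
    (n : nat) (alpha : 'I_n -> F) (P : {poly F}) (c : 'rV[Fq]_n) :
  (c \in goppa_code f alpha P) = (P %| goppa_syndrome f alpha P c).
Proof. by rewrite inE. Qed.

Section InverseModulo.

Variable F : fieldType.

Lemma mulXsubC_inv_mod_lin (P : {poly F}) (a : F) : P.[a] != 0 ->
  ('X - a%:P) * inv_mod_lin P a = 1 - P.[a]^-1 *: P.
Proof.
move=> Pa; rewrite /inv_mod_lin -scalerAr mulrC divpK.
  rewrite scalerBr !scaleNr opprK -!mul_polyC -polyCM mulVf //.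
  by rewrite addrC mul_polyC.
by rewrite -root_factor_theorem /root !hornerE subrr.
Qed.

Lemma dvdp_sub_inv_mod_lin (D w : {poly F}) (a : F) : D.[a] != 0 ->
  D %| ('X - a%:P) * w - 1 -> D %| w - inv_mod_lin D a.
Proof.
move=> Da Dw; have cop : coprimep D ('X - a%:P) by rewrite coprimep_XsubC.
rewrite -(Gauss_dvdpr _ cop) mulrBr mulXsubC_inv_mod_lin // opprB addrCA.
by rewrite dvdp_add // dvdpZr ?invr_eq0 // dvdpp.
Qed.

End InverseModulo.

Section ScalarExtension.

Variables (F F' : fieldType) (g : {rmorphism F -> F'}).
Variables (P : {poly F}) (D : {poly F'}).
Hypothesis D_dvd_P : D %| map_poly g P.

Lemma horner_dvdp_map_neq0 (a : F) : P.[a] != 0 -> D.[g a] != 0.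
Proof.
move=> Pa; apply: contra Pa => /(root_dvdp D_dvd_P).
by rewrite fmorph_root.
Qed.

Lemma dvdp_map_inv_mod_lin (a : F) : P.[a] != 0 ->
  D %| map_poly g (inv_mod_lin P a) - inv_mod_lin D (g a).
Proof.
move=> Pa; apply: dvdp_sub_inv_mod_lin; first exact: horner_dvdp_map_neq0.
rewrite -map_polyXsubC -rmorphM -(rmorph1 (map_poly g)) -rmorphB /=.
rewrite mulXsubC_inv_mod_lin // addrAC subrr add0r -scaleNr map_polyZ.
by rewrite -mul_polyC dvdp_mull.
Qed.

End ScalarExtension.

Lemma dvdp_map_goppa_syndrome (F F' : fieldType) (g : {rmorphism F -> F'})
    (P : {poly F}) (D : {poly F'}) (Fq : finFieldType) (f : Fq -> F)
    (n : nat) (alpha : 'I_n -> F) (c : 'rV[Fq]_n) :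
  D %| map_poly g P -> (forall k, P.[alpha k] != 0) ->
  D %| map_poly g (goppa_syndrome f alpha P c)
         - goppa_syndrome (g \o f) (g \o alpha) D c.
Proof.
move=> D_dvd_P Pa; rewrite /goppa_syndrome raddf_sum -sumrB.
apply: (big_ind (fun q => D %| q)) => [||k _]; [exact: dvdp0 | exact: dvdp_add |].
rewrite /= map_polyZ -scalerBr -mul_polyC dvdp_mull //.
exact: dvdp_map_inv_mod_lin.
Qed.

Lemma dvdp_prod_coprime (R : idomainType) (I : eqType) (r : seq I)
    (Q : I -> {poly R}) (p : {poly R}) :
  uniq r -> (forall i i', i != i' -> coprimep (Q i) (Q i')) ->
  (\prod_(i <- r) Q i %| p) = all (fun i => Q i %| p) r.
Proof.
move=> + coQ; elim: r => [|i r IHr] /=; first by rewrite big_nil dvd1p.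
case/andP=> i_notin_r uniq_r; rewrite big_cons Gauss_dvdp ?IHr //.
elim: r i_notin_r {IHr uniq_r} => [|i' r IHr] /=; first by rewrite big_nil coprimep1.
by rewrite inE negb_or big_cons coprimepMr => /andP[/coQ-> /IHr].
Qed.

Lemma goppa_code_map_prod (Fq : finFieldType) (F F' : fieldType) (f : Fq -> F)
    (g : {rmorphism F -> F'}) (n : nat) (alpha : 'I_n -> F) (P : {poly F})
    (I : finType) (D : I -> {poly F'}) :
  (forall k, P.[alpha k] != 0) -> map_poly g P = \prod_i D i ->
  (forall i i', i != i' -> coprimep (D i) (D i')) ->
  goppa_code f alpha P = \bigcap_i goppa_code (g \o f) (g \o alpha) (D i).
Proof.
move=> Pa defP coD; apply/setP => c.
have D_dvd_P i : D i %| map_poly g P by rewrite defP (bigD1 i) //= dvdp_mulr.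
have congr i := dvdp_map_goppa_syndrome f c (D_dvd_P i) Pa.
rewrite in_goppa_code -(dvdp_map g) defP dvdp_prod_coprime ?index_enum_uniq //.
apply/allP/bigcapP => D_dvd i _.
  by rewrite in_goppa_code -(dvdp_subr _ (D_dvd i (mem_index_enum i))) congr.
have := D_dvd i isT; rewrite in_goppa_code => Di_dvd_S.
by rewrite -(dvdp_subl _ Di_dvd_S) congr.
Qed.

Lemma separable_prod_XsubC_inj (R : idomainType) (I : finType) (b : I -> R) :
  separable.separable_poly (\prod_i ('X - (b i)%:P)) -> injective b.
Proof.
rewrite -big_enum /= -(big_map b predT (fun x => 'X - x%:P)).
by rewrite separable.separable_prod_XsubC => /injectiveP.
Qed.

Theorem corollary2
  (Fq : finFieldType) (m : nat) (K : finFieldType)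
  (iK : {rmorphism Fq -> K})
  (E : finFieldType) (iE : {rmorphism K -> E})
  (hm : (1 <= m)%N) (hK : #|K| = (#|Fq| ^ m)%N)
  (j : nat) (hj : (1 <= j)%N)
  (G : {poly K}) (tau : nat) (beta : 'I_tau -> E)
  (hsep : separable.separable_poly G)
  (hfact : map_poly iE G = \prod_(i < tau) ('X - (beta i)%:P))
  (n : nat) (alpha : 'I_n -> K)
  (halpha : injective alpha)
  (hGa : forall k, G.[alpha k] != 0) :
  goppa_code iK alpha (G ^+ j) =
  \bigcap_(i < tau)
     goppa_code (fun x => iE (iK x)) (fun k => iE (alpha k))
       (('X - (beta i)%:P) ^+ j).
Proof.
have beta_inj : injective beta.
  by apply: separable_prod_XsubC_inj; rewrite -hfact separable.separable_map.
apply: goppa_code_map_prod => [k | | i i' neq_ii'].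
- by rewrite horner_exp expf_neq0.
- by rewrite rmorphXn /= hfact prodrXl.
- apply/coprimep_expl/coprimep_expr/coprimep_XsubC2.
  by rewrite subr_eq0 (inj_eq beta_inj) eq_sym.
Qed.
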